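(* Let $G=\bigl((f_j)_{j=1}^n;(\mu^{R})_{\emptyset\ne R\subseteq[n]}\bigr)$ be an $n$-resource selection game with $f_1,\ldots,f_n$ continuous, and let $S\subseteq[n]$. Then for every $j\in[n]\setminus S$, $h_j(G-S)\ge h_j(G)$.
   Context: An $n$-resource selection game is $G=\bigl((f_j)_{j=1}^n;(\mu^{R})_{\emptyset\ne R\subseteq[n]}\bigr)$ with each $f_j:[0,\infty)\to\mathbb{R}$ nondecreasing and each $\mu^R\ge0$ (games on a general finite resource set are defined analogously). A consumption profile assigns to each nonempty $R$ a vector $s(R)\ge0$ supported on $R$ with total $\mu^R$; loads $\mu^s_j=\sum_R s_j(R)$, costs $h^s_j=f_j(\mu^s_j)$; $s$ is a Nash equilibrium if for every $R$, every $k$ with $s_k(R)>0$ and every $j\in R$, $h^s_k\le h^s_j$. When all $f_j$ are continuous, a Nash equilibrium exists and every Nash equilibrium gives resource $j$ the same cost; $h_j(G)$ denotes this common value. Resource removal: for $S\subsetneq[n]$, $G-S$ is the game with resources $[n]\setminus S$, cost functions $(f_j)_{j\notin S}$, and mass $\sum_{R:\,R\setminus S=R'}\mu^R$ for each nonempty $R'\subseteq[n]\setminus S$ (players who can use only resources in $S$ are removed); $G-\emptyset=G$. *)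

From mathcomp Require Import all_boot.
From Stdlib Require Import Reals.
Set Implicit Arguments.
Unset Strict Implicit.
Unset Printing Implicit Defensive.

(* Resources are 'I_n.  A game on an active resource set A ⊆ 'I_n is given by
   cost functions f : 'I_n -> R -> R and masses mu : {set 'I_n} -> R,
   where only nonempty subsets X ⊆ A are player types. *)

Definition nondecr_nonneg (g : R -> R) : Prop :=
  forall x y : R, (0 <= x)%R -> (x <= y)%R -> (g x <= g y)%R.

Definition cont_nonneg (g : R -> R) : Prop :=
  forall x : R, (0 <= x)%R -> forall eps : R, (0 < eps)%R ->
    exists delta : R, (0 < delta)%R /\
      forall y : R, (0 <= y)%R -> (Rabs (y - x) < delta)%R ->
        (Rabs (g y - g x) < eps)%R.

Definition ptype (n : nat) (A X : {set 'I_n}) : bool :=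
  (X != set0) && (X \subset A).

Definition is_profile (n : nat) (A : {set 'I_n}) (mu : {set 'I_n} -> R)
    (s : {set 'I_n} -> 'I_n -> R) : Prop :=
  forall X : {set 'I_n}, ptype A X ->
    (forall j, (0 <= s X j)%R) /\
    (forall j, j \notin X -> s X j = 0%R) /\
    \big[Rplus/0%R]_(j : 'I_n) s X j = mu X.

Definition load (n : nat) (A : {set 'I_n}) (s : {set 'I_n} -> 'I_n -> R)
    (j : 'I_n) : R :=
  \big[Rplus/0%R]_(X : {set 'I_n} | ptype A X) s X j.

Definition hcost (n : nat) (A : {set 'I_n}) (f : 'I_n -> R -> R)
    (s : {set 'I_n} -> 'I_n -> R) (j : 'I_n) : R :=
  f j (load A s j).

Definition is_NE (n : nat) (A : {set 'I_n}) (f : 'I_n -> R -> R)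
    (mu : {set 'I_n} -> R) (s : {set 'I_n} -> 'I_n -> R) : Prop :=
  is_profile A mu s /\
  forall (X : {set 'I_n}) (k j : 'I_n), ptype A X ->
    (0 < s X k)%R -> j \in X -> (hcost A f s k <= hcost A f s j)%R.

(* masses of G - S: mass of R' is the sum of mu^R over R with R \ S = R' *)
Definition removed_mass (n : nat) (S : {set 'I_n}) (mu : {set 'I_n} -> R)
    (X : {set 'I_n}) : R :=
  \big[Rplus/0%R]_(Y : {set 'I_n} | (Y != set0) && (Y :\: S == X)) mu Y.

(* Suppose resource j became strictly cheaper in G - S, and let U be the set of
   remaining resources that became strictly cheaper.  Each of them carries
   strictly less load in G - S, so the total load on U drops.  On the other
   hand, if a player type Y of G sends mass to some k in U, the equilibrium
   condition forces the type Y \ S of G - S to use only resources of U (they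
   are at most as expensive as k in G - S, and at least as expensive as k in
   G); so that type puts all its mass, which includes the mass of Y, on U.
   Summing over the types of G - S, the load on U cannot drop. *)

From HB Require Import structures.
From mathcomp Require Import all_boot.
From Stdlib Require Import Reals Lra Classical.

Set Implicit Arguments.
Unset Strict Implicit.
Unset Printing Implicit Defensive.

HB.instance Definition _ :=
  Monoid.isComLaw.Build R 0%R Rplus
    (fun a b c => esym (Rplus_assoc a b c)) Rplus_comm Rplus_0_l.

Section RealSums.

Variables (I : Type) (r : seq I) (P : pred I).

Lemma Rsum_le (F G : I -> R) :
  (forall i, P i -> (F i <= G i)%R) ->
  (\big[Rplus/0%R]_(i <- r | P i) F i <= \big[Rplus/0%R]_(i <- r | P i) G i)%R.
Proof.
move=> leFG; apply: (big_rec2 (fun a b => (a <= b)%R)); first lra.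
by move=> i a b Pi; have := leFG i Pi; lra.
Qed.

Lemma Rsum_ge0 (F : I -> R) :
  (forall i, P i -> (0 <= F i)%R) -> (0 <= \big[Rplus/0%R]_(i <- r | P i) F i)%R.
Proof.
move=> F_ge0; apply: (big_ind (fun a => (0 <= a)%R)) => //; first lra.
by move=> x y; lra.
Qed.

End RealSums.

Lemma Rsum_lt (T : finType) (U : {pred T}) (j : T) (F G : T -> R) :
  j \in U -> (F j < G j)%R -> (forall i, i \in U -> (F i <= G i)%R) ->
  (\big[Rplus/0%R]_(i in U) F i < \big[Rplus/0%R]_(i in U) G i)%R.
Proof.
move=> jU ltFGj leFG; rewrite (bigD1 j) //= [X in (_ < X)%R](bigD1 j) //=.
apply: Rplus_lt_le_compat => //.
by apply: Rsum_le => i /andP[iU _]; apply: leFG.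
Qed.

Lemma Rsum_sub_le (T : finType) (U : {pred T}) (F : T -> R) :
  (forall i, (0 <= F i)%R) ->
  (\big[Rplus/0%R]_(i in U) F i <= \big[Rplus/0%R]_i F i)%R.
Proof.
move=> F_ge0; rewrite [X in (_ <= X)%R](bigID (mem U)) /=.
have : (0 <= \big[Rplus/0%R]_(i | i \notin U) F i)%R by apply: Rsum_ge0.
by lra.
Qed.

Lemma nondecr_nonneg_lt (g : R -> R) (x y : R) :
  nondecr_nonneg g -> (0 <= y)%R -> (g x < g y)%R -> (x < y)%R.
Proof.
move=> g_mono y_ge0 ltg; apply: Rnot_le_lt => le_yx.
by have := g_mono _ _ y_ge0 le_yx; lra.
Qed.

Section Profiles.

Variables (n : nat) (A : {set 'I_n}) (mu : {set 'I_n} -> R).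
Variable s : {set 'I_n} -> 'I_n -> R.
Hypothesis s_profile : is_profile A mu s.

Lemma profile_ge0 X : ptype A X -> forall k, (0 <= s X k)%R.
Proof. by case/s_profile. Qed.

Lemma profile_support X k : ptype A X -> (0 < s X k)%R -> k \in X.
Proof.
move=> /s_profile[_ [s_out _]] s_pos; apply: contraT => kX.
by rewrite (s_out k kX) in s_pos; exfalso; lra.
Qed.

Lemma profile_eq0 X k : ptype A X -> ~ (0 < s X k)%R -> s X k = 0%R.
Proof. by move=> AX /Rnot_lt_le s_le0; have := profile_ge0 AX k; lra. Qed.

Lemma load_ge0 k : (0 <= load A s k)%R.
Proof. by apply: Rsum_ge0 => X AX; apply: profile_ge0. Qed.

End Profiles.

Section Removal.

Variables (n : nat) (f : 'I_n -> R -> R) (mu : {set 'I_n} -> R).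
Variables (S : {set 'I_n}) (s s' : {set 'I_n} -> 'I_n -> R).
Hypothesis s_NE : is_NE [set: 'I_n] f mu s.
Hypothesis s'_NE : is_NE (~: S) f (removed_mass S mu) s'.

Local Notation h := (hcost [set: 'I_n] f s).
Local Notation h' := (hcost (~: S) f s').

Definition cheaper : {set 'I_n} :=
  [set k | (k \notin S) && (if Rlt_dec (h' k) (h k) then true else false)].

Lemma in_cheaper k : k \in cheaper <-> k \notin S /\ (h' k < h k)%R.
Proof. by rewrite inE; case: Rlt_dec => ?; rewrite ?andbT ?andbF; intuition. Qed.

Lemma ptype_setDS Y : Y :\: S != set0 -> ptype (~: S) (Y :\: S).
Proof.
move=> YS_n0; rewrite /ptype YS_n0; apply/subsetP => x.
by rewrite !inE => /andP[].
Qed.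

Lemma cheaper_closed Y k i :
  ptype [set: 'I_n] Y -> k \in cheaper -> (0 < s Y k)%R ->
  (0 < s' (Y :\: S) i)%R -> i \in cheaper.
Proof.
move=> AY /in_cheaper[kS lt_k] s_pos s'_pos.
have kYS : k \in Y :\: S by rewrite inE kS (profile_support s_NE.1 AY s_pos).
have A'YS : ptype (~: S) (Y :\: S) by apply: ptype_setDS; apply/set0Pn; exists k.
have /setDP[iY iS] := profile_support s'_NE.1 A'YS s'_pos.
have le_h' := s'_NE.2 _ i k A'YS s'_pos kYS.
by have le_h := s_NE.2 Y k i AY s_pos iY; apply/in_cheaper; split=> //; lra.
Qed.

Lemma cheaper_full_mass Y k :
  ptype [set: 'I_n] Y -> k \in cheaper -> (0 < s Y k)%R ->
  \big[Rplus/0%R]_(i in cheaper) s' (Y :\: S) i = removed_mass S mu (Y :\: S).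
Proof.
move=> AY kU s_pos.
have kYS : k \in Y :\: S.
  by case/in_cheaper: kU => kS _; rewrite inE kS (profile_support s_NE.1 AY s_pos).
have A'YS : ptype (~: S) (Y :\: S) by apply: ptype_setDS; apply/set0Pn; exists k.
have [_ [_ <-]] := s'_NE.1 _ A'YS.
rewrite [RHS](bigID (mem cheaper)) /= [X in _ = (_ + X)%R]big1 ?Rplus_0_r //.
move=> i iU; apply: (profile_eq0 s'_NE.1 A'YS) => s'_pos.
by have := cheaper_closed AY kU s_pos s'_pos; rewrite (negbTE iU).
Qed.

Lemma type_mass_cheaper_le X : ptype (~: S) X ->
  (\big[Rplus/0%R]_(Y | ptype [set: 'I_n] Y && (Y :\: S != set0) && (Y :\: S == X))
     \big[Rplus/0%R]_(k in cheaper) s Y k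
   <= \big[Rplus/0%R]_(k in cheaper) s' X k)%R.
Proof.
move=> A'X; case: (classic (exists Y k, [/\ ptype [set: 'I_n] Y, Y :\: S == X,
                                          k \in cheaper & (0 < s Y k)%R])).
- move=> [Y0 [k0 [AY0 /eqP YSX k0U s_pos]]].
  rewrite -YSX (cheaper_full_mass AY0 k0U s_pos) YSX.
  have -> : removed_mass S mu X = \big[Rplus/0%R]_(Y | ptype [set: 'I_n] Y
                 && (Y :\: S != set0) && (Y :\: S == X)) mu Y.
    have X_n0 : X != set0 by case/andP: A'X.
    apply: eq_bigl => Y.
    by case: (Y :\: S =P X) => [-> | _]; rewrite ?andbF /ptype ?X_n0 ?subsetT ?andbT.
  apply: Rsum_le => Y /andP[/andP[AY _] _]; have [_ [_ <-]] := s_NE.1 Y AY.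
  exact: Rsum_sub_le (profile_ge0 s_NE.1 AY).
- move=> no_mass; rewrite big1; last first.
    move=> Y /andP[/andP[AY _] YSX]; apply: big1 => k kU.
    by apply: (profile_eq0 s_NE.1 AY) => s_pos; apply: no_mass; exists Y, k.
  by apply: Rsum_ge0 => k _; apply: (profile_ge0 s'_NE.1 A'X).
Qed.

Lemma load_cheaper_le :
  (\big[Rplus/0%R]_(k in cheaper) load [set: 'I_n] s k
   <= \big[Rplus/0%R]_(k in cheaper) load (~: S) s' k)%R.
Proof.
rewrite /load exchange_big /= [X in (_ <= X)%R]exchange_big /=.
rewrite (bigID (fun Y => Y :\: S != set0)) /= [X in (_ + X)%R]big1; last first.
  move=> Y /andP[AY /negPn/eqP YS0]; apply: big1 => k /in_cheaper[kS _].
  apply: (profile_eq0 s_NE.1 AY) => /(profile_support s_NE.1 AY) kY.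
  have : k \in Y :\: S by rewrite inE kY kS.
  by rewrite YS0 inE.
rewrite Rplus_0_r (partition_big (fun Y => Y :\: S) (ptype (~: S))) /=.
  by apply: Rsum_le; apply: type_mass_cheaper_le.
by move=> Y /andP[_ YS_n0]; apply: ptype_setDS.
Qed.

End Removal.

(* Continuity, nonnegative masses and S <> [n] only serve to make h_j(G) and
   h_j(G - S) well defined; here both equilibria are given. *)
Theorem mainTheorem19 (n : nat) (f : 'I_n -> R -> R) (mu : {set 'I_n} -> R)
    (S : {set 'I_n}) :
  (forall j, nondecr_nonneg (f j)) ->
  (forall j, cont_nonneg (f j)) ->
  (forall X : {set 'I_n}, X != set0 -> (0 <= mu X)%R) ->
  S != [set: 'I_n] ->
  forall j : 'I_n, j \notin S ->
  forall s s' : {set 'I_n} -> 'I_n -> R,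
    is_NE [set: 'I_n] f mu s ->
    is_NE (~: S) f (removed_mass S mu) s' ->
    (hcost [set: 'I_n] f s j <= hcost (~: S) f s' j)%R.
Proof.
move=> f_mono _ _ _ j jS s s' s_NE s'_NE; apply: Rnot_lt_le => lt_j.
have load_lt k : k \in cheaper f S s s' ->
    (load (~: S) s' k < load [set: 'I_n] s k)%R.
  move=> /in_cheaper[_ lt_k]; apply: nondecr_nonneg_lt lt_k => //.
  exact: load_ge0 s_NE.1 k.
have jU : j \in cheaper f S s s' by apply/in_cheaper.
have load_sum_lt := Rsum_lt jU (load_lt j jU) (fun k kU => Rlt_le _ _ (load_lt k kU)).
exact: Rlt_not_le load_sum_lt (load_cheaper_le s_NE s'_NE).
Qed.
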